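(* Let $E=(E_C,\gamma_{C'C},\delta_{CC'})$ be an object of the category $\mathcal{A}$ (defined in the context), and let $O$ denote the unique minimal face of $\mathcal{C}$ (the face $\{0\}$). Then the vector space $E_O$ becomes a left $R$-module if each generator $e_C$ ($C\in\mathcal{C}$) is made to act by $e_C(v)=\delta_{CO}\gamma_{OC}(v)$.
   Context: Let $\mathcal{H}$ be a finite arrangement of linear hyperplanes in $\mathbb{R}^n$; for each $H\in\mathcal{H}$ fix a real linear form $f_H$ with $H=\ker f_H$. For $x\in\mathbb{R}^n$ its sign vector $\sigma(x)\in\{+,-,0\}^{\mathcal{H}}$ records the sign of $f_H(x)$ for each $H$. The faces of $\mathcal{H}$ are the classes of points with equal sign vectors; $\mathcal{C}$ is the set of faces, partially ordered by $C'\le C$ iff $C'\subseteq\overline{C}$. Chambers are faces of dimension $n$. Two faces $A,B$ of the same dimension $d\ge 1$ oppose each other if they have the same real linear span and there is a face $C$ of dimension $d-1$ with $C\le A$, $C\le B$ and $\sigma(A)_H=-\sigma(B)_H$ for every $H$ with $\sigma(C)_H=0$. Faces $A,B,C$ are collinear if some straight line segment in $\mathbb{R}^n$ meets $A$, $B$, $C$ in that order. The algebra $R$: let $R_0$ be the $\mathbb{C}$-algebra generated by symbols $e_C$, $C\in\mathcal{C}$, subject to (R1) $e_C^2=e_C$; (R2) $e_Ae_C=e_Ae_Be_C$ whenever $A,B,C$ are collinear; (R3) $e_Ae_B=e_B=e_Be_A$ whenever $A\le B$. Then $R$ is the noncommutative localisation of $R_0$ obtained by inverting all elements $e_Ae_Be_A+(1-e_A)$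 with $A,B$ opposing faces. A double representation $E$ of $\mathcal{C}$ consists of vector spaces $E_C$ ($C\in\mathcal{C}$) and linear maps $\gamma_{C'C}:E_{C'}\to E_C$, $\delta_{CC'}:E_C\to E_{C'}$ for each $C'\le C$, with $\gamma_{CC}=\delta_{CC}=\mathrm{id}$, $\gamma_{C_2C_3}\gamma_{C_1C_2}=\gamma_{C_1C_3}$ and $\delta_{C_2C_1}\delta_{C_3C_2}=\delta_{C_3C_1}$ for $C_1\le C_2\le C_3$. The category $\mathcal{A}$ is the full subcategory of finite-dimensional double representations satisfying: (monotonicity) $\gamma_{C'C}\delta_{CC'}=\mathrm{id}_{E_C}$ for all $C'\le C$, so that $\varphi_{AB}:=\gamma_{CB}\delta_{AC}:E_A\to E_B$ is independent of the choice of $C$ with $C\le A$, $C\le B$; (transitivity) $\varphi_{AC}=\varphi_{BC}\varphi_{AB}$ whenever $A,B,C$ are collinear; (invertibility) $\varphi_{AB}$ is an isomorphism whenever $A,B$ oppose each other. *)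

From mathcomp Require Import all_boot all_order all_algebra.
From mathcomp Require Import complex.
From mathcomp Require Import reals Rstruct.
Set Implicit Arguments. Unset Strict Implicit. Unset Printing Implicit Defensive.
Import Order.TTheory GRing.Theory Num.Theory.
Local Open Scope ring_scope.

Notation Rl := Rdefinitions.R.
Notation Cx := (Rdefinitions.R[i]).

Section Arrangement.
(* n = ambient dimension, m = number of hyperplanes, f H = the linear form f_H,
   given by its coefficient row vector: f_H(x) = sum_j x_j (f H)_j. *)
Variables (n m : nat) (f : 'I_m -> 'rV[Rl]_n).

Definition form_eval (H : 'I_m) (x : 'rV[Rl]_n) : Rl := (x *m (f H)^T) 0 0.

Definition sigvec (x : 'rV[Rl]_n) : {ffun 'I_m -> int} :=
  [ffun H => sgz (form_eval H x)].

(* a face is represented by its sign vector, which must be realised by a point *)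
Definition face := {s : {ffun 'I_m -> int} | exists x, sigvec x = s}.

Definition in_face (C : face) (x : 'rV[Rl]_n) : Prop := sigvec x = proj1_sig C.

Definition fsign (C : face) (H : 'I_m) : int := proj1_sig C H.

Definition in_closure (C : face) (x : 'rV[Rl]_n) : Prop :=
  forall e : Rl, 0 < e -> exists y, in_face C y /\ forall j, `|x 0 j - y 0 j| < e.

Definition face_le (C' C : face) : Prop := forall x, in_face C' x -> in_closure C x.

Definition in_span (C : face) (v : 'rV[Rl]_n) : Prop :=
  exists k (M : 'M[Rl]_(k, n)), (forall i, in_face C (row i M)) /\ (v <= M)%MS.

Definition face_dim (C : face) (d : nat) : Prop :=
  (exists k (M : 'M[Rl]_(k, n)), (forall i, in_face C (row i M)) /\ \rank M = d) /\
  (forall k (M : 'M[Rl]_(k, n)), (forall i, in_face C (row i M)) -> (\rank M <= d)%N).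

Definition opposing (A B : face) : Prop :=
  exists d : nat, (1 <= d)%N /\ face_dim A d /\ face_dim B d /\
    (forall v, in_span A v <-> in_span B v) /\
    exists C : face, face_dim C d.-1 /\ face_le C A /\ face_le C B /\
      forall H, fsign C H = 0 -> fsign A H = - fsign B H.

Definition collinear (A B C : face) : Prop :=
  exists p q r (t : Rl), in_face A p /\ in_face B q /\ in_face C r /\
    0 <= t /\ t <= 1 /\ q = (1 - t) *: p + t *: r.

Definition face0 : face := exist _ (sigvec 0) (ex_intro _ 0 erefl).

(* Double representations, with E_C = C^(d C) (column vectors, maps act on
   the left).  gam C' C : E_{C'} -> E_C  and  del C C' : E_C -> E_{C'}. *)
Section DoubleRep.
Variables (d : face -> nat)
  (gam : forall C' C : face, 'M[Cx]_(d C, d C'))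
  (del : forall C C' : face, 'M[Cx]_(d C', d C)).

Definition double_rep : Prop :=
  (forall C, gam C C = 1%:M) /\ (forall C, del C C = 1%:M) /\
  (forall C1 C2 C3, face_le C1 C2 -> face_le C2 C3 ->
     gam C2 C3 *m gam C1 C2 = gam C1 C3) /\
  (forall C1 C2 C3, face_le C1 C2 -> face_le C2 C3 ->
     del C2 C1 *m del C3 C2 = del C3 C1).

(* phi_AB := gamma_{CB} delta_{AC}, computed with C = O (by monotonicity it
   does not depend on the choice of C <= A, B). *)
Definition phi (A B : face) : 'M[Cx]_(d B, d A) := gam face0 B *m del A face0.

Definition in_catA : Prop :=
  double_rep /\
  (forall C' C, face_le C' C -> gam C' C *m del C C' = 1%:M) /\
  (forall A B C, collinear A B C -> phi A C = phi B C *m phi A B) /\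
  (forall A B, opposing A B ->
     exists psi : 'M[Cx]_(d A, d B), psi *m phi A B = 1%:M /\ phi A B *m psi = 1%:M).
End DoubleRep.

(* A family rho : faces -> End(C^N) defines a left R-module structure on C^N
   with e_C acting by rho C iff the defining relations (R1)-(R3) of R_0 hold
   and the elements e_A e_B e_A + (1 - e_A), A, B opposing, act invertibly
   (universal property of the presentation of R_0 and of the localisation R). *)
Definition R_module_structure (N : nat) (rho : face -> 'M[Cx]_N) : Prop :=
  (forall C, rho C *m rho C = rho C) /\
  (forall A B C, collinear A B C -> rho A *m rho C = rho A *m rho B *m rho C) /\
  (forall A B, face_le A B -> rho A *m rho B = rho B /\ rho B *m rho A = rho B) /\
  (forall A B, opposing A B -> (rho A *m rho B *m rho A + (1%:M - rho A)) \in unitmx).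

End Arrangement.

Definition arrangement (n m : nat) (f : 'I_m -> 'rV[Rl]_n) : Prop :=
  (forall H, f H != 0) /\ (forall H H', H != H' -> forall c : Rl, f H != c *: f H').

(* Every face contains O in its closure, so monotonicity gives
   gamma_{OC} delta_{CO} = 1: P_C := delta_{CO} is a split injection with
   retraction Q_C := gamma_{OC}, and e_C acts by the idempotent P_C Q_C.
   Conjugation X |-> P X Q by a split injection is multiplicative, which turns
   (R2) and (R3) into the transitivity and composition laws of E, and turns
   e_A e_B e_A + (1 - e_A) into P_A (phi_BA phi_AB) Q_A + (1 - P_A Q_A), which is
   invertible because phi_BA phi_AB is. *)
From mathcomp Require Import all_boot all_order all_algebra.
From mathcomp Require Import complex.
From mathcomp Require Import reals Rstruct.
Set Implicit Arguments. Unset Strict Implicit. Unset Printing Implicit Defensive.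
Import GRing.Theory Num.Theory.
Local Open Scope ring_scope.

Section SplitConjugation.
Variables (R : comUnitRingType) (a b : nat) (P : 'M[R]_(a, b)) (Q : 'M[R]_(b, a)).
Hypothesis QP : Q *m P = 1%:M.

Lemma mulmx_split_conj (X Y : 'M_b) :
  P *m X *m Q *m (P *m Y *m Q) = P *m (X *m Y) *m Q.
Proof.
by rewrite !mulmxA -(mulmxA _ Q) QP mulmx1 -(mulmxA P X).
Qed.

Lemma split_idem : P *m Q *m (P *m Q) = P *m Q.
Proof. by have := mulmx_split_conj 1%:M 1%:M; rewrite !mulmx1. Qed.

Lemma mulmx_split_conj_idem (X : 'M_b) : P *m X *m Q *m (P *m Q) = P *m X *m Q.
Proof. by have := mulmx_split_conj X 1%:M; rewrite !mulmx1. Qed.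

Lemma mulmx_split_idem_conj (X : 'M_b) : P *m Q *m (P *m X *m Q) = P *m X *m Q.
Proof. by have := mulmx_split_conj 1%:M X; rewrite !mulmx1 !mul1mx. Qed.

Lemma split_conj_corner_unit (X Y : 'M_b) : X *m Y = 1%:M ->
  P *m X *m Q + (1%:M - P *m Q) \in unitmx.
Proof.
move=> XY.
suff /mulmx1_unit[] : (P *m X *m Q + (1%:M - P *m Q)) *m
                      (P *m Y *m Q + (1%:M - P *m Q)) = 1%:M by [].
rewrite mulmxDl !mulmxDr !mulmxDl !mulmxN !mulNmx !mulmx1 !mul1mx.
rewrite mulmx_split_conj XY mulmx1 mulmx_split_conj_idem mulmx_split_idem_conj.
by rewrite split_idem opprK !subrr addNr !addr0 add0r addrC subrK.
Qed.

End SplitConjugation.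

Section Faces.
Variables (n m : nat) (f : 'I_m -> 'rV[Rl]_n).

Lemma form_eval_face0 (H : 'I_m) x : in_face (face0 f) x -> form_eval f H x = 0.
Proof.
move=> /ffunP /(_ H); rewrite !ffunE [form_eval _ _ 0]/form_eval mul0mx mxE sgz0.
by move/eqP; rewrite sgz_eq0 => /eqP.
Qed.

Lemma in_face_face0_addZ (C : face f) x y (s : Rl) :
  in_face (face0 f) x -> in_face C y -> 0 < s -> in_face C (x + s *: y).
Proof.
move=> x0 yC s_gt0; rewrite /in_face -yC; apply/ffunP => H; rewrite !ffunE.
have := form_eval_face0 H x0; rewrite /form_eval mulmxDl -scalemxAl => x0H.
by rewrite [X in sgz X]mxE x0H add0r [X in sgz X]mxE sgzM gtr0_sgz // mul1r.
Qed.

Lemma face0_le (C : face f) : face_le (face0 f) C.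
Proof.
move=> x x0 e e_gt0.
have [y yC] : exists y, in_face C y by case: C => c [y yc]; exists y.
set S := 1 + \sum_j `|y 0 j|.
have S_gt0 : 0 < S by rewrite ltr_wpDr // sumr_ge0.
exists (x + (e / S) *: y); split.
  by apply: in_face_face0_addZ x0 yC _; rewrite divr_gt0.
move=> j; rewrite !mxE opprD addrA subrr add0r normrN normrM gtr0_norm ?divr_gt0 //.
have yj_lt : `|y 0 j| < S by rewrite /S (bigD1 j) //= addrA ltr_wpDr ?ltrDr ?sumr_ge0.
by rewrite mulrAC ltr_pdivrMr // ltr_pM2l.
Qed.

Lemma opposing_sym (A B : face f) : opposing A B -> opposing B A.
Proof.
case=> k [k_ge1 [dA [dB [span_eq [C [dC [CA [CB sgn]]]]]]]].
exists k; do 3 split => //; split; first by move=> v; rewrite span_eq.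
by exists C; do 3 split => //; move=> H /sgn ->; rewrite opprK.
Qed.

Lemma collinear_sym (A B C : face f) : collinear A B C -> collinear C B A.
Proof.
case=> p [q [r [t [pA [qB [rC [t_ge0 [t_le1 q_eq]]]]]]]].
exists r, q, p, (1 - t); do 3 split => //.
split; first by rewrite subr_ge0.
split; first by rewrite lerBlDr lerDl.
by rewrite q_eq opprB addrCA subrr addr0 addrC.
Qed.

End Faces.

Section FaceAction.
Variables (n m : nat) (f : 'I_m -> 'rV[Rl]_n) (d : face f -> nat)
  (gam : forall C' C : face f, 'M[Cx]_(d C, d C'))
  (del : forall C C' : face f, 'M[Cx]_(d C', d C)).

Definition face_action (C : face f) : 'M[Cx]_(d (face0 f)) :=
  del C (face0 f) *m gam (face0 f) C.

Local Notation O := (face0 f).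
Local Notation rho := face_action.

Hypothesis mono : forall C' C, face_le C' C -> gam C' C *m del C C' = 1%:M.

Lemma gam_del_face0 C : gam O C *m del C O = 1%:M.
Proof. exact/mono/face0_le. Qed.

Lemma face_action_mul A B : rho A *m rho B = del A O *m phi gam del B A *m gam O B.
Proof. by rewrite /face_action /phi !mulmxA. Qed.

Lemma face_action_idem C : rho C *m rho C = rho C.
Proof. exact/split_idem/gam_del_face0. Qed.

Hypothesis phi_trans : forall A B C, collinear A B C ->
  phi gam del A C = phi gam del B C *m phi gam del A B.

Lemma face_action_collinear A B C : collinear A B C ->
  rho A *m rho C = rho A *m rho B *m rho C.
Proof.
move/collinear_sym/phi_trans => phiCA.
by rewrite face_action_mul phiCA /phi /face_action !mulmxA.
Qed.

Hypothesis gam_comp : forall C1 C2 C3, face_le C1 C2 -> face_le C2 C3 ->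
  gam C2 C3 *m gam C1 C2 = gam C1 C3.
Hypothesis del_comp : forall C1 C2 C3, face_le C1 C2 -> face_le C2 C3 ->
  del C2 C1 *m del C3 C2 = del C3 C1.

Lemma face_action_le A B : face_le A B ->
  rho A *m rho B = rho B /\ rho B *m rho A = rho B.
Proof.
move=> AB; rewrite /face_action; split.
  rewrite -(del_comp (face0_le A) AB) !mulmxA -(mulmxA _ (gam O A)).
  by rewrite gam_del_face0 mulmx1.
rewrite -(gam_comp (face0_le A) AB) !mulmxA -(mulmxA _ (gam O A)).
by rewrite gam_del_face0 mulmx1.
Qed.

Hypothesis phi_inv : forall A B, opposing A B ->
  exists psi, psi *m phi gam del A B = 1%:M /\ phi gam del A B *m psi = 1%:M.

Lemma face_action_opposing A B : opposing A B ->
  rho A *m rho B *m rho A + (1%:M - rho A) \in unitmx.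
Proof.
move=> AB; have [psiAB [_ phiAB_psi]] := phi_inv AB.
have [psiBA [_ phiBA_psi]] := phi_inv (opposing_sym AB).
have -> : rho A *m rho B *m rho A + (1%:M - rho A) =
    del A O *m (phi gam del B A *m phi gam del A B) *m gam O A +
    (1%:M - del A O *m gam O A).
  by rewrite face_action_mul /face_action /phi !mulmxA.
apply: (split_conj_corner_unit (gam_del_face0 A) (Y := psiAB *m psiBA)).
by rewrite -mulmxA (mulmxA _ psiAB) phiAB_psi mul1mx phiBA_psi.
Qed.

End FaceAction.

Theorem proposition2p6 (n m : nat) (f : 'I_m -> 'rV[Rl]_n)
  (Harr : arrangement f)
  (d : face f -> nat)
  (gam : forall C' C : face f, 'M[Cx]_(d C, d C'))
  (del : forall C C' : face f, 'M[Cx]_(d C', d C))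
  (HE : in_catA gam del) :
  R_module_structure (fun C : face f => del C (face0 f) *m gam (face0 f) C).
Proof.
have [[_ [_ [gam_comp del_comp]]] [mono [phi_trans phi_inv]]] := HE.
split; first exact: face_action_idem mono.
split; first exact: face_action_collinear phi_trans.
split; first exact: face_action_le mono gam_comp del_comp.
exact: face_action_opposing mono phi_inv.
Qed.
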